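(* Let $k\in\mathbb{N}$, let $u=a_1\cdots a_n$ be a word over a finite alphabet $A$, and let $i<j$ be positions with $a_i=a_j$ and $a_\ell\neq a_i$ for all $\ell\in\{i+1,\dots,j-1\}$. Suppose the attributes satisfy $x_i+y_i\le k+1$ and $x_j\le k$. Then for every word $v$ with $u\sim_k v$, the positions $r^u_i(v)$ and $r^u_j(v)$ are defined and $r^u_i(v)<r^u_j(v)$.
   Context: $w\prec v$ ($w$ is a scattered subword of $v$) means $v=v_0b_1v_1\cdots b_mv_m$ where $w=b_1\cdots b_m$. $u\sim_k v$ iff $u,v$ have the same subwords of length at most $k$. An X-ranker is a nonempty word over $\{\mathsf X_a : a\in A\}$, a Y-ranker a nonempty word over $\{\mathsf Y_a:a\in A\}$, length = word length. For a word $w$: $\mathsf X_a(w)$ is the smallest $a$-position, $r\mathsf X_a(w)$ the smallest $a$-position greater than $r(w)$; $\mathsf Y_a(w)$ the greatest $a$-position, $r\mathsf Y_a(w)$ the greatest $a$-position smaller than $r(w)$ (possibly undefined). The attribute of position $p$ of $u$ is $(x_p,y_p)$, $x_p$ (resp. $y_p$) the minimal length of an X-ranker (resp. Y-ranker) $r$ with $r(u)=p$. Canonical X-ranker $r^u_p$: let $R^u_p$ be the set of X-rankers of length $x_p$ reaching $p$ in $u$; set $S_{x_p}=R^u_p$ and for $t=x_p-1,\dots,1$ let $q_t$ be the minimal position of $u$ reached by length-$t$ prefixes of rankers in $S_{t+1}$ and $S_t$ the set of those rankers in $S_{t+1}$ whose length-$t$ prefix reaches $q_t$; then $S_1=\{r^u_p\}$.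 *)

From mathcomp Require Import all_boot.
Set Implicit Arguments. Unset Strict Implicit. Unset Printing Implicit Defensive.

(* Words are [seq A] over a finite alphabet [A : finType].
   Positions are 0-indexed: position q of w holds [onth w q]
   (paper position q+1). *)
Section Rankers.
Variable A : finType.
Implicit Types (w u v : seq A) (a : A).

Definition xfrom w (s : nat) a : option nat :=
  ohead [seq q <- iota s (size w - s) | onth w q == Some a].

Definition yfrom w (b : nat) a : option nat :=
  ohead (rev [seq q <- iota 0 (minn b (size w)) | onth w q == Some a]).

(* An X-ranker X_{a1} X_{a2} ... X_{am} is represented by [:: a1; ...; am]
   (nonempty); the leftmost letter is applied first:
   X_a(w) = xfrom w 0 a and (r X_a)(w) = xfrom w (r(w)+1) a. *)
Fixpoint xrun w (s : nat) (r : seq A) : option nat :=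
  match r with
  | [::] => None
  | a :: r' => if r' is [::] then xfrom w s a
               else obind (fun p => xrun w p.+1 r') (xfrom w s a)
  end.
Definition xeval w (r : seq A) : option nat := xrun w 0 r.

(* Y-rankers: Y_a(w) = yfrom w (size w) a, (r Y_a)(w) = yfrom w (r(w)) a. *)
Fixpoint yrun w (b : nat) (r : seq A) : option nat :=
  match r with
  | [::] => None
  | a :: r' => if r' is [::] then yfrom w b a
               else obind (fun p => yrun w p r') (yfrom w b a)
  end.
Definition yeval w (r : seq A) : option nat := yrun w (size w) r.

Definition xreach u p n : bool :=
  [exists t : n.-tuple A, (0 < n) && (xeval u t == Some p)].
Definition yreach u p n : bool :=
  [exists t : n.-tuple A, (0 < n) && (yeval u t == Some p)].

(* attributes: least n with xreach u p n (resp. yreach); for a position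
   p < size u such an n <= p+1 (resp. <= size u - p) always exists, so the
   search over 0..size u finds it. *)
Definition xattr u p : nat := find (xreach u p) (iota 0 (size u).+1).
Definition yattr u p : nat := find (yreach u p) (iota 0 (size u).+1).

Section Canonical.
Variables (u : seq A) (p : nat).
Let n := xattr u p.

Definition Rset : {set n.-tuple A} :=
  [set r : n.-tuple A | (0 < n) && (xeval u r == Some p)].

(* from S_{t+1} build S_t: q_t is the minimal position reached by the
   length-t prefixes of rankers in S_{t+1} *)
Definition qmin (S : {set n.-tuple A}) (t : nat) : nat :=
  \big[minn/size u]_(r in S) odflt (size u) (xeval u (take t r)).
Definition refine_step (S : {set n.-tuple A}) (t : nat) : {set n.-tuple A} :=
  [set r in S | xeval u (take t r) == Some (qmin S t)].

Fixpoint refine_iter (S : {set n.-tuple A}) (m : nat) : {set n.-tuple A} :=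
  match m with
  | 0 => S
  | m'.+1 => refine_iter (refine_step S m'.+1) m'
  end.

Definition S1 : {set n.-tuple A} := refine_iter Rset n.-1.

(* r^u_p : the (unique) element of S_1 *)
Definition canon : option (seq A) := omap val [pick r in S1].
End Canonical.

Definition canon_eval u p v : option nat := obind (xeval v) (canon u p).

Definition simk (k : nat) u v : Prop :=
  forall w : seq A, size w <= k -> subseq w u = subseq w v.
End Rankers.

From mathcomp Require Import all_boot all_order zify.
Set Implicit Arguments. Unset Strict Implicit. Unset Printing Implicit Defensive.
Import Order.TTheory.

(* An X-ranker r is defined on a word w exactly when r, read as a word, is a
   subword of w, and r(w) is where the leftmost embedding of r into w ends; so
   u ~_k v transfers definedness of rankers of length at most k.  Let a be the
   letter at i and j, and r_i, r_j the canonical rankers.  As r_i X_a reaches j,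
   x_j <= x_i + 1.  If x_j = x_i + 1, the first refinement step selects exactly
   the rankers r X_a with r(u) = i and the later steps only inspect prefixes of
   length < x_i, so r_j = r_i X_a, and r_j(v) is the first a after r_i(v).
   Otherwise r_j = s X_a with i <= s(u) < j, and a shortest Y-ranker reaching i
   gives a word a z that embeds into u from position i on but not after i.  The
   words r_i z and s a z have length at most x_i + y_i - 1 <= k.  Now r_i z
   embeds into u, hence into v with z after r_i(v); if s(v) < r_i(v), then
   s a z embeds into v, hence into u with a z after s(u) >= i, which is
   impossible.  So r_i(v) <= s(v) < r_j(v). *)

Lemma onth_lt (T : Type) (x : T) (s : seq T) n :
  n < size s -> onth s n = Some (nth x s n).
Proof. by move=> ns; rewrite onthE (nth_map x). Qed.

Lemma find_iota_min (P : pred nat) m n : P n -> n <= m ->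
  P (find P (iota 0 m.+1)) /\ forall k, k < find P (iota 0 m.+1) -> ~~ P k.
Proof.
move=> Pn nm; set f := find P _.
have hasP : has P (iota 0 m.+1) by apply/hasP; exists n; rewrite ?mem_iota.
have fm : f < m.+1 by rewrite -[m.+1](size_iota 0) -has_find.
split; first by have := nth_find 0 hasP; rewrite nth_iota.
by move=> k kf; have := before_find 0 kf; rewrite nth_iota ?(ltn_trans kf fm) // add0n => ->.
Qed.

Lemma bigminn_le_image (I J : finType) (P : {pred I}) (Q : {pred J})
    (F : I -> nat) (G : J -> nat) x :
  (forall j, j \in Q -> exists2 i, i \in P & F i = G j) ->
  \big[minn/x]_(i in P) F i <= \big[minn/x]_(j in Q) G j.
Proof.
move=> QP; rewrite -minEnat -leEnat; apply/bigmin_geP; split; first exact: bigmin_le_id.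
by move=> j /QP[i Pi <-]; apply: bigmin_le_cond.
Qed.

Section Subwords.
Variable T : eqType.
Implicit Types (s l r : seq T) (c : T).

Lemma subseq_take_take l m n : m <= n -> subseq (take m l) (take n l).
Proof. by move=> mn; rewrite -(take_takel _ mn) take_subseq. Qed.

Lemma subseq_drop_drop l m n : m <= n -> subseq (drop n l) (drop m l).
Proof. by move=> mn; rewrite -(subnK mn) -drop_drop drop_subseq. Qed.

Lemma subseq_rcons_take s l c p : onth l p = Some c ->
  subseq s (take p l) -> subseq (rcons s c) (take p.+1 l).
Proof.
move=> lp sp; have pl : p < size l by rewrite -onthTE lp.
by rewrite (take_nth c pl) (onth_nth c _ _ _ lp) -!cats1 subseq_cat2r.
Qed.

Lemma rcons_take_last s c n : size s = n.+1 -> rcons (take n s) (last c s) = s.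
Proof.
case/lastP: s => // s d; rewrite size_rcons => -[<-].
by rewrite last_rcons -!cats1 take_size_cat.
Qed.

Lemma subseq_cat_split r1 r2 l : subseq (r1 ++ r2) l ->
  exists t, subseq r1 (take t l) && subseq r2 (drop t l).
Proof.
elim: l r1 => [|d l IH] [|c r1] //=.
- by move=> h; exists 0.
- by move=> h; exists 0; rewrite drop0.
case: ifP => [/eqP ->|ne] h.
  by have [t /andP[h1 h2]] := IH r1 h; exists t.+1; rewrite /= eqxx h1.
by have [t /andP[h1 h2]] := IH (c :: r1) h; exists t.+1; rewrite /= h2 ne andbT.
Qed.
End Subwords.

Section GreedyEmbedding.
Variable A : finType.
Implicit Types (l r w : seq A) (c : A).

(* The position of [l] at which the leftmost embedding of [r] into [l] ends. *)
Fixpoint greedy l r : option nat :=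
  match l, r with
  | _, [::] | [::], _ => None
  | d :: l', c :: r' =>
      if c == d then (if r' is [::] then Some 0 else omap S (greedy l' r'))
      else omap S (greedy l' r)
  end.

Lemma greedy_nil l : greedy l [::] = None.
Proof. by case: l. Qed.

Lemma greedy_subseq_take l r q : r != [::] ->
  subseq r (take q l) = if greedy l r is Some p then p < q else false.
Proof.
elim: l r q => [|d l IH] [|c r'] // q _.
case: q => [|q].
  by rewrite take0 /=; case: ifP => _; [case: r' => [|? ?] //=|]; case: greedy.
rewrite /=; case: (c == d); last by rewrite IH //; case: greedy.
by case: r' => [|c' r'] /=; [rewrite sub0seq | rewrite IH //; case: greedy].
Qed.

Lemma greedy_last l c r p : greedy l (c :: r) = Some p -> onth l p = Some (last c r).
Proof.
elim: l c r p => [|d l IH] c r p //=.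
case: ifP => [/eqP ->|_]; last by case E: greedy => [p'|] //= [<-]; exact: IH.
case: r => [|c' r] /=; first by case=> <-.
by case E: greedy => [p'|] //= [<-]; exact: IH.
Qed.

Lemma greedy_cons l c r : r != [::] ->
  greedy l (c :: r) =
  obind (fun p => omap (addn p.+1) (greedy (drop p.+1 l) r)) (greedy l [:: c]).
Proof.
move=> nr; elim: l => [|d l IH] //=; rewrite -/(greedy l (c :: r)).
case: ifP => _; last by rewrite IH; case: (greedy l [:: c]) => [p|] //=; case: greedy.
by rewrite /= drop0; case: r nr {IH} => [|c' r'] //= _; case: greedy.
Qed.

Lemma xfromE w s c : xfrom w s c = omap (addn s) (greedy (drop s w) [:: c]).
Proof.
rewrite /xfrom; move E: (size w - s) => n.
elim: n s E => [|n IH] s E /=.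
  by rewrite drop_oversize // -subn_eq0 E.
have sw : s < size w by rewrite -subn_gt0 E.
rewrite (drop_nth c sw) /= (onth_lt c sw) (inj_eq Some_inj) eq_sym.
case: ifP => _ /=; first by rewrite addn0.
rewrite IH; last by rewrite subnS E.
by case: greedy => //= p; rewrite addnS addSn.
Qed.

Lemma xrun_cons w s c r : r != [::] ->
  xrun w s (c :: r) = obind (fun p => xrun w p.+1 r) (xfrom w s c).
Proof. by case: r. Qed.

Lemma yrun_cons w b c r : r != [::] ->
  yrun w b (c :: r) = obind (fun p => yrun w p r) (yfrom w b c).
Proof. by case: r. Qed.

Lemma xrunE w s r : xrun w s r = omap (addn s) (greedy (drop s w) r).
Proof.
elim: r s => [|c r IH] s; first by rewrite greedy_nil.
case: r IH => [|c' r] IH; first by rewrite /= xfromE.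
rewrite xrun_cons // xfromE (@greedy_cons _ c (c' :: r)) //.
case: (greedy (drop s w) [:: c]) => [p|] //=.
rewrite -/(xrun w (s + p).+1 (c' :: r)) IH drop_drop addnC; case: greedy => //= q.
by rewrite !addSn addnS addnA (addnC p).
Qed.

Lemma xevalE w r : xeval w r = greedy w r.
Proof. by rewrite /xeval xrunE drop0; case: greedy. Qed.

Lemma yfromE w b c : b <= size w ->
  yfrom w b c = omap (fun p => b - p.+1) (greedy (rev (take b w)) [:: c]).
Proof.
rewrite /yfrom => bw; rewrite (minn_idPl bw).
elim: b bw => [|b IH] bw; first by rewrite take0.
rewrite -addn1 iotaD add0n /= filter_cat /= rev_cat addn1 (take_nth c bw) rev_rcons.
rewrite (onth_lt c bw) (inj_eq Some_inj) /= (eq_sym c).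
case: ifP => _ /=; first by rewrite subSS subn0.
by rewrite IH ?(ltnW bw) //; case: greedy => //= p; rewrite subSS.
Qed.

Lemma yrunE w b r : b <= size w ->
  yrun w b r = omap (fun p => b - p.+1) (greedy (rev (take b w)) r).
Proof.
elim: r b => [|c r IH] b bw; first by rewrite greedy_nil.
case: r IH => [|c' r] IH; first by rewrite /= yfromE.
rewrite yrun_cons // yfromE // (@greedy_cons _ c (c' :: r)) //.
case E: (greedy _ [:: c]) => [p|] //=.
have pb : p < b.
  by have := onthTE (rev (take b w)) p; rewrite (greedy_last E) size_rev size_takel.
rewrite -/(yrun w (b - p.+1) (c' :: r)) IH ?(leq_trans (leq_subr _ _) bw) //.
rewrite drop_rev size_takel // take_takel ?leq_subr //.
by case: greedy => //= q; rewrite -subnDA addnS addSn.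
Qed.

Lemma yevalE w r : yeval w r = omap (fun p => size w - p.+1) (xeval (rev w) r).
Proof. by rewrite /yeval yrunE // take_size xevalE. Qed.

End GreedyEmbedding.

Section XevalSubwords.
Variable A : finType.
Implicit Types (l r s : seq A) (c : A).

Lemma xeval_nil l : xeval l [::] = None.
Proof. by rewrite xevalE greedy_nil. Qed.

Lemma xevalP l r p : xeval l r = Some p <-> forall q, subseq r (take q l) = (p < q).
Proof.
rewrite xevalE; have [->|nr] := eqVneq r [::].
  by rewrite greedy_nil; split=> [|/(_ 0)] //; rewrite sub0seq.
split=> [E q|sub]; first by rewrite greedy_subseq_take // E.
have := sub p.+1; rewrite greedy_subseq_take // ltnSn.
case E: (greedy l r) => [p'|] // p'p; congr Some; apply/eqP.
have := sub p'.+1; rewrite greedy_subseq_take // E ltnSn.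
by rewrite eqn_leq -[p' <= p]ltnS p'p ltnS => <-.
Qed.

Lemma xeval_subseq_take l r p q : xeval l r = Some p -> subseq r (take q l) = (p < q).
Proof. by move/xevalP. Qed.

Lemma xeval_lt_size l r p : xeval l r = Some p -> p < size l.
Proof.
move=> E; rewrite -(xeval_subseq_take _ E) take_size.
by apply: subseq_trans (take_subseq l p.+1); rewrite (xeval_subseq_take _ E).
Qed.

Lemma xeval_subseq l r p : xeval l r = Some p -> subseq r l.
Proof. by move=> E; rewrite -(take_size l) (xeval_subseq_take _ E) (xeval_lt_size E). Qed.

Lemma xeval_neq0 l r p : xeval l r = Some p -> r != [::].
Proof. by apply: contraPneq => ->; rewrite xeval_nil. Qed.

Lemma xeval_last x l r p : xeval l r = Some p -> onth l p = Some (last x r).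
Proof. by case: r => [|c r]; rewrite xevalE ?greedy_nil // => /greedy_last. Qed.

Lemma xeval_defined l r : r != [::] -> subseq r l -> exists p, xeval l r = Some p.
Proof.
move=> nr; rewrite -{1}(take_size l) greedy_subseq_take // xevalE.
by case: (greedy l r) => // p _; exists p.
Qed.

Lemma xeval_take l p : p < size l -> xeval l (take p.+1 l) = Some p.
Proof.
move=> pl; apply/xevalP => q; apply/idP/idP => [|pq]; last exact: subseq_take_take.
by move/size_subseq; rewrite !size_take_min (minn_idPl pl) leq_min => /andP[].
Qed.

Lemma xeval_rcons_lt l s c p q :
  xeval l s = Some p -> xeval l (rcons s c) = Some q -> p < q.
Proof.
move=> Es Esc; rewrite -(xeval_subseq_take _ Es).
have := xeval_subseq_take q.+1 Esc; rewrite ltnSn.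
rewrite (take_nth c (xeval_lt_size Esc)) (onth_nth c _ _ _ (xeval_last c Esc)) last_rcons.
by rewrite -!cats1 subseq_cat2r.
Qed.

Lemma xeval_prefix l r p t : xeval l r = Some p -> 0 < t ->
  exists q, xeval l (take t r) = Some q.
Proof.
move=> E t0; apply: xeval_defined; last exact: subseq_trans (take_subseq r t) (xeval_subseq E).
by case: r E t0 (xeval_neq0 E) => // ? ? _; case: t.
Qed.

Lemma subseq_cat_drop_xeval r1 r2 l p :
  subseq (r1 ++ r2) l -> xeval l r1 = Some p -> subseq r2 (drop p.+1 l).
Proof.
move=> /subseq_cat_split[t /andP[r1t r2t]] E.
apply: subseq_trans r2t (subseq_drop_drop _ _).
by rewrite -(xeval_subseq_take _ E).
Qed.

Lemma xeval_rcons_next l r c p q : xeval l r = Some p -> p < q -> onth l q = Some c ->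
  (forall m, p < m < q -> onth l m != Some c) -> xeval l (rcons r c) = Some q.
Proof.
move=> Er pq lq noc.
have rcq : subseq (rcons r c) (take q.+1 l).
  by apply: subseq_rcons_take lq _; rewrite (xeval_subseq_take _ Er).
have [q' Eq'] : exists q', xeval l (rcons r c) = Some q'.
  apply: xeval_defined; first by rewrite -size_eq0 size_rcons.
  exact: subseq_trans rcq (take_subseq _ _).
have q'q : q' <= q by rewrite -ltnS -(xeval_subseq_take _ Eq').
have pq' := xeval_rcons_lt Er Eq'.
have lq' := xeval_last c Eq'; rewrite last_rcons in lq'.
rewrite Eq'; congr Some; apply/eqP; rewrite eqn_leq q'q leqNgt; apply/negP => q'ltq.
by have := noc q'; rewrite pq' q'ltq lq' eqxx => /(_ isT).
Qed.

Lemma xeval_rcons_prev l s c p q : xeval l (rcons s c) = Some q ->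
  onth l p = Some c -> p < q -> exists2 m, xeval l s = Some m & p <= m < q.
Proof.
move=> Esc lp pq.
have notsp : ~~ subseq s (take p l).
  apply: contraL pq => /(subseq_rcons_take lp).
  by rewrite (xeval_subseq_take _ Esc) ltnS -leqNgt.
have [m Em] : exists m, xeval l s = Some m.
  apply: xeval_defined; first by apply: contraNneq notsp => ->; rewrite sub0seq.
  exact: subseq_trans (subseq_rcons s c) (xeval_subseq Esc).
exists m => //; rewrite (xeval_rcons_lt Em Esc) andbT leqNgt.
by rewrite -(xeval_subseq_take _ Em).
Qed.
End XevalSubwords.

Lemma xeval_simk (A : finType) k (u v r : seq A) p :
  simk k u v -> size r <= k -> xeval u r = Some p -> exists q, xeval v r = Some q.
Proof.
move=> sim rk E; apply: xeval_defined (xeval_neq0 E) _.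
by rewrite -sim // (xeval_subseq E).
Qed.

Section Attributes.
Variables (A : finType) (u : seq A).

Lemma xreach_succ p : p < size u -> xreach u p p.+1.
Proof.
move=> pu; have sz : size (take p.+1 u) == p.+1 by rewrite size_takel.
by apply/existsP; exists (Tuple sz); rewrite /= xeval_take.
Qed.

Lemma xreach_xattr p : p < size u -> xreach u p (xattr u p).
Proof. by move=> pu; have [] := find_iota_min (xreach_succ pu) pu. Qed.

Lemma xattr_gt0 p : p < size u -> 0 < xattr u p.
Proof. by move/xreach_xattr => /existsP[? /andP[]]. Qed.

Lemma xattr_le p m : p < size u -> xreach u p m -> xattr u p <= m.
Proof.
move=> pu pm; have [_ xmin] := find_iota_min (xreach_succ pu) pu.
by rewrite leqNgt; apply: contraL pm => /xmin.
Qed.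

Lemma yreach_yattr p : p < size u -> yreach u p (yattr u p).
Proof.
move=> pu; suff : yreach u p (size u - p).
  by move/find_iota_min => /(_ _ (leq_subr p (size u)))[].
have sz : size (take (size u - p) (rev u)) == size u - p.
  by rewrite size_takel ?size_rev ?leq_subr.
apply/existsP; exists (Tuple sz); rewrite /= subn_gt0 pu yevalE.
rewrite -[size u - p]prednK ?subn_gt0 // xeval_take ?size_rev ?prednK ?subn_gt0 ?leq_subr //=.
apply/eqP; congr Some; lia.
Qed.

Lemma yeval_subseq_drop t p : yeval u t = Some p ->
  subseq (rev t) (drop p u) && ~~ subseq (rev t) (drop p.+1 u).
Proof.
rewrite yevalE; case E: xeval => [p'|] //= [<-].
have p'u := xeval_lt_size E; rewrite size_rev in p'u.
have subE d : d <= size u -> subseq (rev t) (drop d u) = (p' < size u - d).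
  by move=> du; rewrite -subseq_rev revK rev_drop (xeval_subseq_take _ E).
by rewrite !subE; lia.
Qed.

Lemma yattr_witness i a : onth u i = Some a -> exists z : seq A,
  [/\ (size z).+1 = yattr u i, subseq z (drop i.+1 u) & ~~ subseq (a :: z) (drop i.+1 u)].
Proof.
move=> ui; have iu : i < size u by rewrite -onthTE ui.
have [t /andP[_ /eqP /yeval_subseq_drop /andP[ti ti1]]] := existsP (yreach_yattr iu).
rewrite (drop_nth a iu) (onth_nth a _ _ _ ui) in ti.
case Et: (rev t) ti ti1 => [|c z] /=; first by rewrite sub0seq.
case: eqP => [-> zi azi|_ ti ti1]; last by rewrite ti in ti1.
by exists z; split => //; rewrite -(size_tuple t) -(size_rev t) Et.
Qed.
End Attributes.

Section CanonicalRanker.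
Variables (A : finType) (u : seq A) (p : nat).
Local Notation n := (xattr u p).
Implicit Types (S : {set n.-tuple A}) (T : n.-tuple A).

Lemma refine_iter_sub S m : refine_iter S m \subset S.
Proof.
elim: m S => [|m IH] S /=; first exact: subxx.
by apply: subset_trans (IH _) _; apply/subsetP => T; rewrite inE => /andP[].
Qed.

Lemma S1_xeval T : T \in S1 u p -> xeval u T = Some p.
Proof. by move/(subsetP (refine_iter_sub _ _)); rewrite inE => /andP[_ /eqP]. Qed.

Lemma refine_step_neq0 S t :
  S \subset Rset u p -> S != set0 -> 0 < t -> refine_step S t != set0.
Proof.
move=> SR /set0Pn[T0 T0S] t0.
pose F T := odflt (size u) (xeval u (take t T)).
have Fle T : T \in S -> (F T <= size u)%O.
  by rewrite /F; case E: xeval => //= _; rewrite leEnat ltnW // (xeval_lt_size E).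
have [T TS qT] := eq_bigmin _ _ _ T0S Fle.
have /(subsetP SR) := TS; rewrite inE => /andP[_ /eqP /xeval_prefix /(_ t0)[q Eq]].
by apply/set0Pn; exists T; rewrite inE TS /qmin -minEnat qT /F Eq /= eqxx.
Qed.

Lemma refine_iter_neq0 S m :
  S \subset Rset u p -> S != set0 -> refine_iter S m != set0.
Proof.
elim: m S => [|m IH] S SR SN //=; apply: IH; last exact: refine_step_neq0.
by apply: subset_trans SR; apply/subsetP => T; rewrite inE => /andP[].
Qed.

Definition prefix_agree S m := {in S &, forall T1 T2 t,
  m < t <= n -> xeval u (take t T1) = xeval u (take t T2)}.

Lemma refine_iter_agree S m : prefix_agree S m -> prefix_agree (refine_iter S m) 0.
Proof.
elim: m S => [|m IH] S // agS /=; apply: IH => T1 T2.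
rewrite !inE => /andP[T1S /eqP e1] /andP[T2S /eqP e2] t /andP[mt tn].
case: (ltngtP t m.+1) => [|tm|->]; [by rewrite ltnS leqNgt mt | | by rewrite e1 e2].
by apply: agS; rewrite ?tm.
Qed.

Lemma Rset_agree : prefix_agree (Rset u p) n.-1.
Proof.
move=> T1 T2; rewrite !inE => /andP[_ /eqP e1] /andP[_ /eqP e2] t /andP[nt tn].
have nt' : n <= t by move: nt; case: (n).
by rewrite !take_oversize ?size_tuple ?e1 ?e2.
Qed.

Lemma S1_uniq : {in S1 u p &, forall T1 T2, T1 = T2}.
Proof.
move=> T1 T2 h1 h2; apply: val_inj; apply: eq_from_onth => k.
have [kn|nk] := ltnP k n; last by rewrite !onth_default ?size_tuple.
have letter T q : xeval u (take k.+1 T) = Some q -> onth u q = onth T k.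
  pose x := tnth T (Ordinal kn); move=> /(xeval_last x) ->.
  by rewrite -nth_last size_takel ?size_tuple // nth_take // (onth_lt x) ?size_tuple.
have [q Eq] := xeval_prefix (S1_xeval h1) (ltn0Sn k).
have Eq2 : xeval u (take k.+1 T2) = Some q.
  by rewrite -(refine_iter_agree Rset_agree h1 h2) // kn.
by rewrite -(letter _ _ Eq) (letter _ _ Eq2).
Qed.

Lemma canon_S1 T : T \in S1 u p -> canon u p = Some (val T).
Proof.
move=> TS; rewrite /canon; case: pickP => [T' T'S|/(_ T)]; last by rewrite TS.
by rewrite (S1_uniq T'S TS).
Qed.

Lemma S1_neq0 : p < size u -> S1 u p != set0.
Proof.
move=> pu; apply: refine_iter_neq0 (subxx _) _.
have /existsP[T RT] := xreach_xattr pu.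
by apply/set0Pn; exists T; rewrite inE.
Qed.

Lemma canon_reaches : p < size u ->
  exists r, [/\ canon u p = Some r, size r = n & xeval u r = Some p].
Proof.
move=> /S1_neq0 /set0Pn[T TS].
by exists (val T); rewrite (canon_S1 TS) size_tuple (S1_xeval TS).
Qed.
End CanonicalRanker.

Section RconsTransfer.
Variables (A : finType) (u : seq A) (i j : nat) (a : A).

Definition rcons_rel (SJ : {set (xattr u j).-tuple A}) (SI : {set (xattr u i).-tuple A}) :=
  (forall T, T \in SJ -> exists2 T', T' \in SI & val T = rcons (val T') a) /\
  (forall T', T' \in SI -> exists2 T, T \in SJ & val T = rcons (val T') a).

Lemma rcons_rel_refine_step SJ SI t :
  rcons_rel SJ SI -> t <= xattr u i -> rcons_rel (refine_step SJ t) (refine_step SI t).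
Proof.
move=> [JI IJ] ti.
have takeE (T : (xattr u j).-tuple A) (T' : (xattr u i).-tuple A) :
    val T = rcons (val T') a -> take t T = take t T'.
  by move=> ->; rewrite -cats1 takel_cat ?size_tuple.
have qE : qmin SJ t = qmin SI t.
  apply/eqP; rewrite eqn_leq !bigminn_le_image // => [T TS|T' T'S].
    by have [T' T'S /takeE e] := JI _ TS; exists T'; rewrite ?e.
  by have [T TS /takeE e] := IJ _ T'S; exists T; rewrite ?e.
split=> [T|T']; rewrite inE => /andP[S_T /eqP ev].
  by have [T' T'S e] := JI _ S_T; exists T' => //; rewrite inE T'S -qE -(takeE _ _ e) ev eqxx.
by have [T TS e] := IJ _ S_T; exists T => //; rewrite inE TS qE (takeE _ _ e) ev eqxx.
Qed.

Lemma rcons_rel_refine_iter SJ SI m :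
  rcons_rel SJ SI -> m <= xattr u i -> rcons_rel (refine_iter SJ m) (refine_iter SI m).
Proof.
elim: m SJ SI => [|m IH] SJ SI // R mi /=.
by apply: IH (ltnW mi); apply: rcons_rel_refine_step.
Qed.
End RconsTransfer.

Section NextOccurrence.
Variables (A : finType) (u : seq A) (i j : nat) (a : A).
Hypotheses (ij : i < j) (ui : onth u i = Some a) (uj : onth u j = Some a).
Hypothesis no_a : forall l, i < l < j -> onth u l != Some a.

Let iu : i < size u. Proof. by rewrite -onthTE ui. Qed.
Let ju : j < size u. Proof. by rewrite -onthTE uj. Qed.

Lemma xeval_rcons_to_next r : xeval u r = Some i -> xeval u (rcons r a) = Some j.
Proof. by move=> E; apply: xeval_rcons_next E ij uj no_a. Qed.

Lemma xattr_next_le : xattr u j <= (xattr u i).+1.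
Proof.
apply: xattr_le ju _; have [r [_ sr Er]] := canon_reaches iu.
have sz : size (rcons r a) == (xattr u i).+1 by rewrite size_rcons sr.
by apply/existsP; exists (Tuple sz); rewrite /= (xeval_rcons_to_next Er).
Qed.

Section LongerRanker.
Hypothesis xattr_j : xattr u j = (xattr u i).+1.
Local Notation N := (xattr u i).

Lemma rcons_tupleP (T : N.-tuple A) : size (rcons T a) == xattr u j.
Proof. by rewrite size_rcons size_tuple xattr_j. Qed.

Lemma Rset_rcons (T : N.-tuple A) : T \in Rset u i -> Tuple (rcons_tupleP T) \in Rset u j.
Proof.
rewrite !inE => /andP[_ /eqP /xeval_rcons_to_next Ej].
have -> : 0 < xattr u j by rewrite xattr_j.
by rewrite /= Ej.
Qed.

Lemma Rset_next_rcons (T : (xattr u j).-tuple A) :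
  T \in Rset u j -> val T = rcons (take N T) a.
Proof.
rewrite inE => /andP[_ /eqP /(xeval_last a)]; rewrite uj => -[->].
by rewrite rcons_take_last // size_tuple xattr_j.
Qed.

Lemma Rset_next_prefix (T : (xattr u j).-tuple A) : T \in Rset u j ->
  exists2 m, xeval u (take N T) = Some m & i <= m.
Proof.
move=> TR; move: (TR); rewrite inE {1}(Rset_next_rcons TR) => /andP[_ /eqP Ej].
by have [m Em /andP[im _]] := xeval_rcons_prev Ej ui ij; exists m.
Qed.

Lemma qmin_Rset_next : qmin (Rset u j) N = i.
Proof.
have take_rcons (T : N.-tuple A) : take N (rcons T a) = T.
  by rewrite -cats1 take_size_cat ?size_tuple.
have [T TR] : exists T, T \in Rset u i.
  by have /existsP[T RT] := xreach_xattr iu; exists T; rewrite inE.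
rewrite /qmin -minEnat; apply/eqP; rewrite eqn_leq -!leEnat; apply/andP; split.
  apply: bigmin_inf (Rset_rcons TR) _.
  by move: TR; rewrite inE /= take_rcons => /andP[_ /eqP ->].
apply/bigmin_geP; split; first by rewrite leEnat ltnW.
by move=> T' /Rset_next_prefix[m -> im].
Qed.

Lemma rcons_rel_next : rcons_rel a (refine_step (Rset u j) N) (Rset u i).
Proof.
split=> [T|T' T'R].
  rewrite inE qmin_Rset_next => /andP[TR /eqP Ei].
  have sz : size (take N T) == N by rewrite size_takel // size_tuple xattr_j.
  by exists (Tuple sz); rewrite ?(Rset_next_rcons TR) // inE xattr_gt0 //= Ei.
exists (Tuple (rcons_tupleP T')) => //.
rewrite inE Rset_rcons // qmin_Rset_next /= -cats1 take_size_cat ?size_tuple //.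
by move: T'R; rewrite inE => /andP[_ ->].
Qed.

Lemma canon_next : canon u j = omap (rcons^~ a) (canon u i).
Proof.
have /set0Pn[T TS] := S1_neq0 ju.
have N0 := xattr_gt0 iu.
have jN : (xattr u j).-1 = N.-1.+1 by rewrite xattr_j prednK.
move: (TS); rewrite /S1 jN /= prednK // => TS'.
have [T' T'S eT] := (rcons_rel_refine_iter rcons_rel_next (leq_pred N)).1 T TS'.
by rewrite (canon_S1 TS) (canon_S1 T'S) eT.
Qed.
End LongerRanker.

Variables (k : nat) (v : seq A).
Hypothesis sim : simk k u v.

Lemma canon_eval_lt_long : xattr u i < xattr u j -> xattr u j <= k ->
  exists pi pj, canon_eval u i v = Some pi /\ canon_eval u j v = Some pj /\ pi < pj.
Proof.
move=> ltij jk.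
have xattr_j : xattr u j = (xattr u i).+1 by apply/eqP; rewrite eqn_leq xattr_next_le.
have [r [ci sr Er]] := canon_reaches iu.
rewrite /canon_eval (canon_next xattr_j) ci /=.
have rk : size r <= k by rewrite sr ltnW // (leq_trans ltij).
have rak : size (rcons r a) <= k by rewrite size_rcons sr -xattr_j.
have [pi Epi] := xeval_simk sim rk Er.
have [pj Epj] := xeval_simk sim rak (xeval_rcons_to_next Er).
by exists pi, pj; rewrite Epi Epj (xeval_rcons_lt Epi Epj).
Qed.

Lemma canon_eval_lt_short : xattr u j <= xattr u i -> xattr u i + yattr u i <= k.+1 ->
  xattr u j <= k ->
  exists pi pj, canon_eval u i v = Some pi /\ canon_eval u j v = Some pj /\ pi < pj.
Proof.
move=> leji hxy jk.
have [ri [ci sri Ei]] := canon_reaches iu.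
have [rj [cj srj Ej]] := canon_reaches ju.
rewrite /canon_eval ci cj /=.
have [s Es] : exists s, rj = rcons s a.
  case/lastP: rj Ej {cj srj} => [|s c] Ej; first by rewrite xeval_nil in Ej.
  by have := xeval_last a Ej; rewrite last_rcons uj => -[->]; exists s.
rewrite {rj cj}Es in Ej srj *.
have [m Em /andP[im _]] := xeval_rcons_prev Ej ui ij.
have [z [sz zu azu]] := yattr_witness ui.
have sak : size (rcons s a) <= k by rewrite srj.
have [pj Epj] := xeval_simk sim sak Ej.
have [ps Eps] := xeval_defined (xeval_neq0 Em)
  (subseq_trans (subseq_rcons s a) (xeval_subseq Epj)).
have riz : subseq (ri ++ z) v.
  rewrite -sim; last by rewrite size_cat sri; lia.
  by rewrite -(cat_take_drop i.+1 u) cat_subseq ?(xeval_subseq_take _ Ei).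
have [pi Epi] := xeval_defined (xeval_neq0 Ei) (subseq_trans (prefix_subseq ri z) riz).
exists pi, pj; do 2!split=> //.
apply: leq_ltn_trans (xeval_rcons_lt Eps Epj); rewrite leqNgt; apply: contra azu => ps_pi.
have va : onth v pi = Some a.
  by rewrite (xeval_last a Epi); have := xeval_last a Ei; rewrite ui => -[<-].
have : subseq (s ++ a :: z) v.
  rewrite -(cat_take_drop pi v) cat_subseq ?(xeval_subseq_take _ Eps) //.
  rewrite (drop_nth a (xeval_lt_size Epi)) (onth_nth a _ _ _ va) /= eqxx.
  exact: subseq_cat_drop_xeval riz Epi.
rewrite -sim; last by move: srj; rewrite size_cat size_rcons /=; lia.
move=> /subseq_cat_drop_xeval /(_ Em) /subseq_trans; apply.
exact: subseq_drop_drop.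
Qed.
End NextOccurrence.

Theorem lemma7 (A : finType) (k : nat) (u : seq A) (i j : nat) :
  i < j -> j < size u ->
  onth u i = onth u j ->
  (forall l, i < l < j -> onth u l != onth u i) ->
  xattr u i + yattr u i <= k.+1 ->
  xattr u j <= k ->
  forall v : seq A, simk k u v ->
    exists pi pj, canon_eval u i v = Some pi /\ canon_eval u j v = Some pj /\ pi < pj.
Proof.
move=> ij ju uij no_a hxy hxj v sim.
case ui: (onth u i) no_a => [a|] no_a; last first.
  by move: (onthTE u i); rewrite ui (ltn_trans ij ju).
have uj : onth u j = Some a by rewrite -uij.
have [leji|ltij] := leqP (xattr u j) (xattr u i).
  exact: (canon_eval_lt_short ij ui uj sim).
exact: (canon_eval_lt_long ij ui uj no_a sim).
Qed.
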